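(* Let $X$ be a real Banach space. Then: (1) if $A\subseteq B\subseteq X$ then $\mathbf E(A)\le\mathbf E(B)$ and $\mathbf E_0(A)\le\mathbf E_0(B)$; (2) for every $A\subseteq X$, $\mathbf E_0(A)\ge\mathbf E(A)\ge\sup_{x\in A}\|x\|$; (3) if $K_{\mathcal B,\mathcal E}$ is a compact brick in $X$ then $\mathbf E(K_{\mathcal B,\mathcal E})=\sup_{x\in K_{\mathcal B,\mathcal E}}\|x\|$; (4) if $K_{\mathcal B,\mathcal E}$ is a compact brick in $X$ with $\mathcal B$ a $1$-unconditional basis, then $\mathbf E_0(K_{\mathcal B,\mathcal E})=\sup_{x\in K_{\mathcal B,\mathcal E}}\|x\|$.
   Context: A brick in $X$ is a set $K_{\mathcal B,\mathcal E}=\{x\in X:\ |e_n^*(x)|\le\varepsilon_n\ \forall n\}$, where $\mathcal B=(e_n)$ is a normalized Schauder basis of $X$ with biorthogonal functionals $(e_n^* )$ and $\mathcal E=(\varepsilon_n)$ is a sequence of nonnegative numbers. Its unconditional radius is $r^{\rm unc}(K_{\mathcal B,\mathcal E})=\sup_{\theta_n=\pm1}\|\sum_n\theta_n\varepsilon_ne_n\|$ (norm of a divergent series $=\infty$). The entropy of $A\subseteq X$ is $\mathbf E(A)=\inf\{r^{\rm unc}(K_{\mathcal B,\mathcal E}): A\subseteq K_{\mathcal B,\mathcal E}\}$, and the unconditional entropy $\mathbf E_0(A)$ is the same infimum restricted to bricks with $\mathcal B$ a $1$-unconditional basis (i.e. $\|\sum_n\theta_ne_n^*(x)e_n\|\le\|x\|$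 for all $x$ and all signs $\theta_n=\pm1$); the infimum of an empty set (or of only infinite values) is $\infty$. *)

From HB Require Import structures.
From mathcomp Require Import all_boot all_order all_algebra.
From mathcomp Require Import all_classical all_reals all_analysis.
Set Implicit Arguments. Unset Strict Implicit. Unset Printing Implicit Defensive.
Import Order.TTheory GRing.Theory Num.Theory.
Import numFieldNormedType.Exports.
Local Open Scope classical_set_scope.
Local Open Scope ring_scope.

Section Bricks.
Variables (R : realType) (X : completeNormedModType R).

Definition normalized_schauder_basis (e : nat -> X) (f : nat -> X -> R) : Prop :=
  (forall n, `|e n| = 1) /\
  (forall x : X, series (fun k => f k x *: e k) @ \oo --> x) /\
  (forall (x : X) (a : nat -> R),
      series (fun k => a k *: e k) @ \oo --> x -> forall n, a n = f n x).

Definition is_sign (theta : nat -> R) : Prop :=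
  forall n, theta n = 1 \/ theta n = -1.

Definition one_unconditional (e : nat -> X) (f : nat -> X -> R) : Prop :=
  forall (x : X) (theta : nat -> R), is_sign theta ->
    cvgn (series (fun k => theta k * f k x *: e k)) /\
    `|limn (series (fun k => theta k * f k x *: e k))| <= `|x|.

Definition brick (e : nat -> X) (f : nat -> X -> R) (eps : nat -> R) : set X :=
  [set x | forall n, `|f n x| <= eps n].

Definition r_unc (e : nat -> X) (eps : nat -> R) : \bar R :=
  ereal_sup [set (if `[< cvgn (series (fun k => theta k * eps k *: e k)) >]
                  then (`|limn (series (fun k => theta k * eps k *: e k))|)%:E
                  else +oo)%E | theta in is_sign].

Definition entropy (A : set X) : \bar R :=
  ereal_inf [set r | exists (e : nat -> X) (f : nat -> X -> R) (eps : nat -> R),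
    [/\ normalized_schauder_basis e f, (forall n, 0 <= eps n),
        A `<=` brick e f eps & r = r_unc e eps]].

Definition entropy0 (A : set X) : \bar R :=
  ereal_inf [set r | exists (e : nat -> X) (f : nat -> X -> R) (eps : nat -> R),
    [/\ normalized_schauder_basis e f /\ one_unconditional e f,
        (forall n, 0 <= eps n), A `<=` brick e f eps & r = r_unc e eps]].

Definition sup_norm (A : set X) : \bar R :=
  ereal_sup [set (`|x|)%:E | x in A].

End Bricks.

(* Monotonicity and E <= E0 hold because the infima range over nested families of
   bricks.  If x lies in a brick K, each partial sum of its expansion has the form
   sum_(k < N) a_k e_k with |a_k| <= eps_k, hence is a convex combination of the
   signed sums sum_(k < N) +-eps_k e_k, and each of these is the average of two
   complete signed series; so |x| <= r_unc K, which gives sup_(x in A) |x| <= E(A).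
   If K is compact, every signed series converges: otherwise it has disjoint blocks
   of norm bounded away from 0 whose subsums all lie in K, which contradicts
   compactness.  Its partial sums lie in K, so r_unc K <= sup_(x in K) |x|. *)

From mathcomp Require Import all_boot all_order all_algebra.
From mathcomp Require Import all_classical all_reals all_analysis.
From mathcomp Require Import ring lra.
Import Order.TTheory GRing.Theory Num.Theory.
Import numFieldNormedType.Exports.
Set Implicit Arguments.
Unset Strict Implicit.
Unset Printing Implicit Defensive.
Local Open Scope classical_set_scope.
Local Open Scope ring_scope.

Lemma count_iota_unbounded (P : pred nat) :
  (forall M, exists2 i, (M <= i)%N & P i) ->
  forall m, exists N, (m <= count P (iota 0 N))%N.
Proof.
move=> infP; elim=> [|m [N mN]]; first by exists 0%N.
have [i Ni Pi] := infP N; exists i.+1.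
rewrite -(subnKC (leqW Ni)) iotaD count_cat add0n -addn1 leq_add //.
by rewrite -has_count; apply/hasP; exists i; rewrite // mem_iota subnKC ?leqnn ?Ni // leqW.
Qed.

Lemma norm_sign_mul (R : realType) (theta : nat -> R) (k : nat) (x : R) :
  is_sign theta -> `|theta k * x| = `|x|.
Proof. by move=> ts; case: (ts k) => ->; rewrite ?mulN1r ?normrN ?mul1r. Qed.

Section NormedSpace.
Variables (R : realType) (V : normedModType R).

Lemma norm_cvg_le (u : nat -> V) (l : V) (r : R) :
  u @ \oo --> l -> (forall n, `|u n| <= r) -> `|l| <= r.
Proof.
move=> ul ur; have nl : (fun n => `|u n|) @ \oo --> `|l| by exact: cvg_norm.
rewrite -(cvg_lim _ nl) //; apply: limr_le; first by apply/cvg_ex; exists `|l|.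
exact: nearW.
Qed.

Lemma norm_add_scale_le (z v : V) (a c r : R) : `|a| <= c ->
  `|z + c *: v| <= r -> `|z - c *: v| <= r -> `|z + a *: v| <= r.
Proof.
move=> ac zcv zcv'.
have [c_eq0 | c_neq0] := eqVneq c 0.
  by move: ac zcv; rewrite c_eq0 normr_le0 => /eqP ->; rewrite !scale0r.
have c0 : 0 < c by rewrite lt0r c_neq0 (le_trans (normr_ge0 a) ac).
move: ac; rewrite ler_norml => /andP[ca ac].
have comb : (c + a) *: (z + c *: v) + (c - a) *: (z - c *: v) = (2 * c) *: (z + a *: v).
  rewrite !scalerDr !scalerN !scalerA addrACA -scalerDl -scaleNr -scalerDl.
  by congr (_ *: _ + _ *: _); ring.
have [ca0 ca1] : 0 <= c + a /\ 0 <= c - a by split; lra.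
have : `|(2 * c) *: (z + a *: v)| <= 2 * c * r.
  rewrite -comb (le_trans (ler_normD _ _)) // !normrZ (ger0_norm ca0) (ger0_norm ca1).
  have -> : 2 * c * r = (c + a) * r + (c - a) * r by ring.
  by rewrite lerD // ler_wpM2l.
by rewrite normrZ gtr0_norm ?ler_pM2l //; lra.
Qed.

Lemma norm_box_le_vertices (e : nat -> V) (eps a : nat -> R) (r : R) (N : nat) :
  (forall k, `|a k| <= eps k) -> forall y : V,
  (forall s, is_sign s -> `|y + \sum_(0 <= k < N) s k * eps k *: e k| <= r) ->
  `|y + \sum_(0 <= k < N) a k *: e k| <= r.
Proof.
move=> ae; elim: N => [|N IH] y vert.
  by have := vert (fun=> 1) (fun=> or_introl erefl); rewrite !big_geq.
rewrite big_nat_recr //= addrA addrAC; apply: IH => s ss.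
set z := \sum_(0 <= k < N) s k * eps k *: e k.
rewrite addrAC.
have vertN (t : R) : t = 1 \/ t = -1 -> `|y + z + t * eps N *: e N| <= r.
  move=> tN; pose s' k := if k == N then t else s k.
  have ss' : is_sign s' by move=> k; rewrite /s'; case: eqP => // _; exact: ss.
  have := vert _ ss'; rewrite big_nat_recr //= /s' eqxx addrA; congr (`|_ + _ + _| <= _).
  by apply: eq_big_nat => k /andP[_ kN]; rewrite ltn_eqF.
apply: (@norm_add_scale_le _ _ _ (eps N)); first exact: ae.
  by have := vertN 1 (or_introl erefl); rewrite mul1r.
by have := vertN (-1) (or_intror erefl); rewrite mulN1r scaleNr.
Qed.

Lemma compact_norm_bounded (K : set V) :
  compact K -> exists B, forall x, K x -> `|x| <= B.
Proof.
move=> /compact_bounded [M [_ HM]].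
by exists (M + 1) => x Kx; apply: (HM (M + 1)); rewrite ?ltrDl.
Qed.

Lemma compact_seq_cluster (K : set V) (u : nat -> V) :
  compact K -> (forall i, K (u i)) ->
  exists2 w, K w & forall (d : R) M, 0 < d -> exists2 i, (M <= i)%N & `|w - u i| < d.
Proof.
move=> Kc uK; have [w [Kw clw]] := Kc (u @ \oo) _ (filterE _ uK).
exists w => // d M d0.
have Fu : (u @ \oo) (u @` [set j | (M <= j)%N]).
  by apply: filterS (nbhs_infty_ge M) => j Mj; exists j.
have [x [[j Mj <-] wj]] := clw _ _ Fu (nbhsx_ballx w _ d0).
by exists j => //; move: wj; rewrite -ball_normE.
Qed.

Lemma norm_sum_close_ge (w : V) (u : nat -> V) (d : R) (s : seq nat) (P : pred nat) :
  (forall i, P i -> `|w - u i| <= d) ->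
  (count P s)%:R * (`|w| - d) <= `|\sum_(i <- s | P i) u i|.
Proof.
move=> close; set c := (count P s)%:R.
have cE : c = \sum_(i <- s | P i) 1 by rewrite /c -sum1_count natr_sum.
have sumE : \sum_(i <- s | P i) u i = c *: w - \sum_(i <- s | P i) (w - u i).
  rewrite sumrB opprB addrC cE scaler_suml.
  by under [X in _ = _ + X]eq_bigr do rewrite scale1r; rewrite subrK.
have errE : `|\sum_(i <- s | P i) (w - u i)| <= c * d.
  rewrite (le_trans (ler_norm_sum _ _ _)) // cE mulr_suml.
  by apply: ler_sum => i Pi; rewrite mul1r close.
rewrite sumE (le_trans _ (lerB_normD _ _)) // normrN normrZ ger0_norm //.
by rewrite mulrBr lerB.
Qed.

(* A cluster point [w] of [u] has norm at least [3 eta / 4], and the subsums over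
   the terms within [eta / 4] of [w] have norm growing linearly in their number. *)
Lemma compact_subsums_small_term (K : set V) (u : nat -> V) (eta : R) :
  compact K -> 0 < eta ->
  (forall N (P : pred nat), K (\sum_(0 <= i < N | P i) u i)) ->
  exists i, `|u i| < eta.
Proof.
move=> Kc eta0 Ksub; apply: contrapT => /forallNP far.
have uK i : K (u i).
  by have := Ksub i.+1 (pred1 i); rewrite big_nat1_eq leqnn.
have [w Kw clw] := compact_seq_cluster Kc uK.
have [B HB] := compact_norm_bounded Kc.
pose P := [pred i | `|w - u i| < eta / 4].
have infP M : exists2 i, (M <= i)%N & P i by apply: clw; rewrite divr_gt0.
have wlb : eta - eta / 4 <= `|w|.
  have [i _ Pi] := infP 0%N; have := ler_normB w (w - u i).
  by rewrite opprB addrCA subrr addr0; move: (far i) Pi => /negP; rewrite -leNgt /=; lra.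
have sub_lb N : (count P (iota 0 N))%:R * (eta / 2) <= B.
  apply: le_trans (HB _ (Ksub N P)).
  have := @norm_sum_close_ge w u (eta / 4) (index_iota 0 N) P (fun i => @ltW _ _ _ _).
  rewrite /index_iota subn0; apply: le_trans.
  by rewrite ler_wpM2l //; lra.
pose m := (Num.truncn (B / (eta / 2))).+1.
have [N mN] := count_iota_unbounded infP m.
have := sub_lb N; have : B < m%:R * (eta / 2).
  by rewrite -ltr_pdivrMr ?divr_gt0 //; exact: truncnS_gt.
have : m%:R * (eta / 2) <= (count P (iota 0 N))%:R * (eta / 2).
  by rewrite ler_wpM2r ?ler_nat // divr_ge0 // ltW.
lra.
Qed.

End NormedSpace.

Lemma divergent_series_far_blocks (R : realType) (V : completeNormedModType R) (u : nat -> V) :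
  ~ cvgn (series u) -> exists2 eta : R, 0 < eta & forall M, exists mn : nat * nat,
    (M <= mn.1 <= mn.2)%N /\ eta <= `|\sum_(mn.1 <= k < mn.2) u k|.
Proof.
move=> ncv; apply: contrapT => nfar; apply: ncv; apply: cauchy_cvg.
apply/cauchy_seriesP => eta eta0.
have [M HM] : exists M, forall m n, (M <= m)%N -> (M <= n)%N ->
    `|\sum_(m <= k < n) u k| < eta.
  apply: contrapT => nM; apply: nfar; exists eta => // M.
  apply: contrapT => nblock; apply: nM; exists M => m n Mm Mn.
  have [mn|nm] := leqP m n; last by rewrite big_geq ?normr0 // ltnW.
  by rewrite ltNge; apply/negP => far; apply: nblock; exists (m, n); rewrite /= Mm mn.
exists ([set m | (M <= m)%N], [set m | (M <= m)%N]); first by split; exists M.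
by case=> m n /= [Mm Mn]; apply: HM.
Qed.

Section Bricks.
Variables (R : realType) (X : completeNormedModType R).
Variables (e : nat -> X) (f : nat -> X -> R).

Definition box (eps : nat -> R) (m n : nat) : set X :=
  [set \sum_(m <= k < n) a k *: e k | a in [set a : nat -> R | forall k, `|a k| <= eps k]].

Definition signed_series (eps theta : nat -> R) : nat -> X :=
  series (fun k => theta k * eps k *: e k).

Lemma box0 (eps : nat -> R) n : (forall k, 0 <= eps k) -> box eps n n 0.
Proof. by move=> eps0; exists eps; rewrite ?big_geq // => k; rewrite ger0_norm. Qed.

Lemma box_cat (eps : nat -> R) m n p x y : (m <= n <= p)%N ->
  box eps m n x -> box eps n p y -> box eps m p (x + y).
Proof.
move=> /andP[mn np] [a ae <-] [b be <-].
exists (fun k => if (k < n)%N then a k else b k) => [k|]; first by case: ifP.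
rewrite (big_cat_nat mn np) /=; congr (_ + _); apply: eq_big_nat => k /andP[nk kp].
  by rewrite kp.
by rewrite ltnNge nk.
Qed.

Lemma box_widen (eps : nat -> R) m m' n' n : (m <= m' <= n')%N -> (n' <= n)%N ->
  box eps m' n' `<=` box eps m n.
Proof.
move=> /andP[mm' m'n'] n'n _ [a ae <-].
exists (fun k => if (m' <= k < n')%N then a k else 0).
  by move=> k; case: ifP => _; rewrite ?normr0 ?(le_trans (normr_ge0 (a k))).
rewrite (big_cat_nat mm' (leq_trans m'n' n'n)) (big_cat_nat m'n' n'n) /=.
rewrite [X in X + (_ + _)]big1_seq => [|k /andP[_]]; last first.
  by rewrite mem_index_iota => /andP[_ km']; rewrite leqNgt km' scale0r.
rewrite [X in _ + (_ + X)]big1_seq => [|k /andP[_]]; last first.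
  by rewrite mem_index_iota => /andP[n'k _]; rewrite ltnNge n'k andbF scale0r.
by rewrite add0r addr0; apply: eq_big_nat => k ->.
Qed.

Lemma box_subsum (eps : nat -> R) (b : nat -> nat) (v : nat -> X) :
  (forall k, 0 <= eps k) -> (forall i, (b i <= b i.+1)%N) ->
  (forall i, box eps (b i) (b i.+1) (v i)) ->
  forall N (P : pred nat), box eps (b 0%N) (b N) (\sum_(0 <= i < N | P i) v i).
Proof.
move=> eps0 bS vbox N P; elim: N => [|N IH]; first by rewrite big_geq //; exact: box0.
rewrite big_mkcond big_nat_recr //= -big_mkcond.
apply: box_cat IH _; first by rewrite bS (homo_leq leqnn (fun _ _ _ => @leq_trans _ _ _) bS).
by case: (P N); [exact: vbox | apply: box_widen (box0 _ _) => //; rewrite leqnn].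
Qed.

Lemma signed_series_box (eps theta : nat -> R) N :
  (forall k, 0 <= eps k) -> is_sign theta -> box eps 0 N (signed_series eps theta N).
Proof.
move=> eps0 ts; exists (fun k => theta k * eps k) => // k.
by rewrite norm_sign_mul // ger0_norm.
Qed.

Lemma signed_series_bounded (eps theta : nat -> R) (r : R) :
  (r_unc e eps <= r%:E)%E -> is_sign theta ->
  cvgn (signed_series eps theta) /\ `|limn (signed_series eps theta)| <= r.
Proof.
move=> ur ts.
have : ((if `[< cvgn (signed_series eps theta) >]
         then (`|limn (signed_series eps theta)|)%:E else +oo) <= r%:E)%E.
  by apply: le_trans ur; apply: ereal_sup_ubound; exists theta.
by case: asboolP.
Qed.

(* Extending [theta] past [N] by the constant signs [1] and [-1] gives two signed
   series whose partial sums average to the [N]-th partial sum of [theta]. *)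
Lemma norm_signed_series_le (eps theta : nat -> R) (r : R) N :
  (r_unc e eps <= r%:E)%E -> is_sign theta -> `|signed_series eps theta N| <= r.
Proof.
move=> ur ts.
pose ext (t : R) k := if (k < N)%N then theta k else t.
have ext_sign t : t = 1 \/ t = -1 -> is_sign (ext t).
  by move=> tN k; rewrite /ext; case: ifP.
have [cv1 le1] := signed_series_bounded ur (ext_sign 1 (or_introl erefl)).
have [cv2 le2] := signed_series_bounded ur (ext_sign (-1) (or_intror erefl)).
set u1 := signed_series eps (ext 1); set u2 := signed_series eps (ext (-1)).
have avg : (fun n => u1 n + u2 n) @ \oo --> 2 *: signed_series eps theta N.
  apply: cvg_near_cst; near=> n.
  have Nn : (N <= n)%N by near: n; exact: nbhs_infty_ge.
  rewrite /u1 /u2 /signed_series /series /= -big_split /= (big_cat_nat (leq0n N) Nn) /=.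
  rewrite [X in _ + X]big1_seq ?addr0 => [|k /andP[_]]; last first.
    rewrite mem_index_iota => /andP[Nk _]; rewrite /ext ltnNge Nk /=.
    by rewrite -scalerDl mulNr mul1r subrr scale0r.
  rewrite scaler_sumr; apply: eq_big_nat => k /andP[_ kN].
  by rewrite /ext kN -scalerDl scalerA; congr (_ *: _); ring.
have lim2 : limn u1 + limn u2 = 2 *: signed_series eps theta N.
  by rewrite -(cvg_lim _ (cvgD cv1 cv2)) // (cvg_lim _ avg).
have : `|2 *: signed_series eps theta N| <= 2 * r.
  by rewrite -lim2 (le_trans (ler_normD _ _)) // mulr2n mulrDl mul1r lerD.
by rewrite normrZ ger0_norm // ler_pM2l.
Unshelve. all: by end_near. Qed.

Hypothesis basis : normalized_schauder_basis e f.

Lemma coef_finite_sum (a : nat -> R) N : (forall k, (N <= k)%N -> a k = 0) ->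
  forall n, f n (\sum_(0 <= k < N) a k *: e k) = a n.
Proof.
have [_ [_ uniq]] := basis; move=> aN n; symmetry; apply: uniq.
apply: cvg_near_cst; near=> m.
have Nm : (N <= m)%N by near: m; exact: nbhs_infty_ge.
rewrite /series /= (big_cat_nat (leq0n N) Nm) /= [X in _ + X]big1_seq ?addr0 //.
by move=> k /andP[_]; rewrite mem_index_iota => /andP[Nk _]; rewrite aN // scale0r.
Unshelve. all: by end_near. Qed.

Lemma box_sub_brick (eps : nat -> R) n : box eps 0 n `<=` brick e f eps.
Proof.
move=> _ [a ae <-] k; pose a' j := if (j < n)%N then a j else 0.
have -> : \sum_(0 <= j < n) a j *: e j = \sum_(0 <= j < n) a' j *: e j.
  by apply: eq_big_nat => j /andP[_ jn]; rewrite /a' jn.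
rewrite coef_finite_sum => [|j]; last by rewrite /a' ltnNge => ->.
rewrite /a'; case: ifP => _; first exact: ae.
by rewrite normr0 (le_trans (normr_ge0 _) (ae k)).
Qed.

Lemma signed_series_cvg (eps theta : nat -> R) : (forall k, 0 <= eps k) ->
  compact (brick e f eps) -> is_sign theta -> cvgn (signed_series eps theta).
Proof.
move=> eps0 Kc ts; apply: contrapT => /divergent_series_far_blocks [eta eta0 far].
have [g gP] := choice far.
pose b := fix b i := if i is i'.+1 then (g (b i')).2 else 0%N.
pose v i := \sum_((g (b i)).1 <= k < b i.+1) theta k * eps k *: e k.
have bS i : (b i <= b i.+1)%N.
  by have [/andP[bg g12] _] := gP (b i); exact: leq_trans bg g12.
have vbox i : box eps (b i) (b i.+1) (v i).
  have [bg _] := gP (b i); apply: box_widen bg (leqnn _) _ _.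
  by exists (fun k => theta k * eps k) => // k; rewrite norm_sign_mul // ger0_norm.
have [i] := compact_subsums_small_term Kc eta0
  (fun N P => box_sub_brick (box_subsum eps0 bS vbox N P)).
by have [_ far_i] := gP (b i); rewrite ltNge far_i.
Qed.

Lemma norm_brick_le (eps : nat -> R) (r : R) x :
  brick e f eps x -> (r_unc e eps <= r%:E)%E -> `|x| <= r.
Proof.
move=> bx ur; have [_ [expand _]] := basis.
apply: norm_cvg_le (expand x) _ => N; rewrite /series /=.
have := norm_box_le_vertices bx (y := 0) (r := r) (N := N) (e := e).
rewrite !add0r; apply => s ss; rewrite add0r.
exact: (norm_signed_series_le N ur ss).
Qed.

Lemma norm_le_r_unc (eps : nat -> R) x :
  brick e f eps x -> ((`|x|)%:E <= r_unc e eps)%E.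
Proof.
move=> bx; case E: (r_unc e eps) => [r| |]; first 2 last.
- have := @norm_brick_le eps (`|x| - 1) x bx; rewrite E leNye => /(_ isT).
  by rewrite lerBrDr -lerBrDl subrr ler10.
- by rewrite lee_fin (norm_brick_le bx) // E.
- exact: leey.
Qed.

Lemma r_unc_le_sup_norm (eps : nat -> R) : (forall k, 0 <= eps k) ->
  compact (brick e f eps) -> (r_unc e eps <= sup_norm (brick e f eps))%E.
Proof.
move=> eps0 Kc; apply: ge_ereal_sup => _ [theta ts <-].
rewrite asboolT; last exact: signed_series_cvg.
have normK x : brick e f eps x -> ((`|x|)%:E <= sup_norm (brick e f eps))%E.
  by move=> Kx; apply: ereal_sup_ubound; exists x.
have := normK 0 (box_sub_brick (box0 0 eps0)); rewrite normr0.
case E: (sup_norm _) => [s | | ] // _; last exact: leey.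
rewrite lee_fin; apply: norm_cvg_le (signed_series_cvg eps0 Kc ts) _ => n.
by rewrite -lee_fin -E; apply: normK; exact: box_sub_brick (signed_series_box n eps0 ts).
Qed.

End Bricks.

Section Entropy.
Variables (R : realType) (X : completeNormedModType R).
Implicit Types A B : set X.
Local Open Scope ereal_scope.

Lemma le_entropy A B : A `<=` B -> entropy A <= entropy B.
Proof.
move=> AB; apply: ereal_inf_le_tmp => _ [e [f [eps [basis eps0 Bb ->]]]].
by exists e, f, eps; split => //; exact: subset_trans Bb.
Qed.

Lemma le_entropy0 A B : A `<=` B -> entropy0 A <= entropy0 B.
Proof.
move=> AB; apply: ereal_inf_le_tmp => _ [e [f [eps [basis eps0 Bb ->]]]].
by exists e, f, eps; split => //; exact: subset_trans Bb.
Qed.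

Lemma entropy_le_entropy0 A : entropy A <= entropy0 A.
Proof.
apply: ereal_inf_le_tmp => _ [e [f [eps [[basis _] eps0 Ab ->]]]].
by exists e, f, eps.
Qed.

Lemma sup_norm_le_entropy A : sup_norm A <= entropy A.
Proof.
apply: le_ereal_inf_tmp => _ [e [f [eps [basis _ Ab ->]]]].
by apply: ge_ereal_sup => _ [x Ax <-]; have := norm_le_r_unc basis (Ab _ Ax).
Qed.

Lemma entropy_le_r_unc A (e : nat -> X) (f : nat -> X -> R) (eps : nat -> R) :
  normalized_schauder_basis e f -> (forall k, (0 <= eps k)%R) ->
  A `<=` brick e f eps -> entropy A <= r_unc e eps.
Proof. by move=> basis eps0 Ab; apply: ereal_inf_lbound; exists e, f, eps. Qed.

Lemma entropy0_le_r_unc A (e : nat -> X) (f : nat -> X -> R) (eps : nat -> R) :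
  normalized_schauder_basis e f -> one_unconditional e f -> (forall k, (0 <= eps k)%R) ->
  A `<=` brick e f eps -> entropy0 A <= r_unc e eps.
Proof. by move=> basis unc eps0 Ab; apply: ereal_inf_lbound; exists e, f, eps. Qed.

End Entropy.

Theorem proposition4p2 (R : realType) (X : completeNormedModType R) :
  (forall A B : set X, A `<=` B ->
     (entropy A <= entropy B)%E /\ (entropy0 A <= entropy0 B)%E) /\
  (forall A : set X,
     (entropy A <= entropy0 A)%E /\ (sup_norm A <= entropy A)%E) /\
  (forall (e : nat -> X) (f : nat -> X -> R) (eps : nat -> R),
     normalized_schauder_basis e f -> (forall n, 0 <= eps n) ->
     compact (brick e f eps) ->
     entropy (brick e f eps) = sup_norm (brick e f eps)) /\
  (forall (e : nat -> X) (f : nat -> X -> R) (eps : nat -> R),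
     normalized_schauder_basis e f -> one_unconditional e f ->
     (forall n, 0 <= eps n) ->
     compact (brick e f eps) ->
     entropy0 (brick e f eps) = sup_norm (brick e f eps)).
Proof.
split; first by move=> A B AB; split; [exact: le_entropy | exact: le_entropy0].
split; first by move=> A; split; [exact: entropy_le_entropy0 | exact: sup_norm_le_entropy].
split=> [e f eps basis eps0 Kc | e f eps basis unc eps0 Kc];
  apply/eqP; rewrite eq_le; apply/andP; split.
- apply: le_trans (r_unc_le_sup_norm basis eps0 Kc).
  exact: entropy_le_r_unc basis eps0 _.
- exact: sup_norm_le_entropy.
- apply: le_trans (r_unc_le_sup_norm basis eps0 Kc).
  exact: entropy0_le_r_unc basis unc eps0 _.
- exact: le_trans (sup_norm_le_entropy _) (entropy_le_entropy0 _).
Qed.
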